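(* Let $n\ge 2$ and let $E_1,\dots,E_n,H_1,\dots,H_n$ be logically independent events with $H_i\neq\emptyset$ for all $i$. Let $\mathcal F=\{E_1|H_1,\dots,E_n|H_n,\mathscr C_{1\cdots n}\}$ and let $\mathcal M=(x_1,\dots,x_n,x_{1\cdots n})\in\mathbb R^{n+1}$ be a prevision assessment on $\mathcal F$ (with $x_i=P(E_i|H_i)$, $x_{1\cdots n}=\mathbb P(\mathscr C_{1\cdots n})$). Let $\mathcal I^*\subseteq\mathbb R^{n+1}$ be the convex hull of the $2^n$ points $(q_1,\dots,q_n,q_1q_2\cdots q_n)$ with $(q_1,\dots,q_n)\in\{0,1\}^n$. If $\mathcal M\in\mathcal I^*$, then $\mathcal M$ is coherent.
   Context: Events are identified with their indicators; $\bar E$ is the negation of $E$ and $EH$ the conjunction. For events $E,H$ with $H\neq\emptyset$, the conditional event $E|H$ is true if $EH$ is true, false if $\bar EH$ is true, void if $\bar H$ is true; once $P(E|H)=x$ is assessed, $E|H$ is identified with the random quantity $EH+x\bar H$. More generally a finite conditional random quantity $X|H$ with assessed prevision $\mu=\mathbb P(X|H)$ is identified with $XH+\mu\bar H$. Coherence (de Finetti): a prevision assessment $(\mu_1,\dots,\mu_m)$ on a family $\{X_1|H_1,\dots,X_m|H_m\}$ is coherent iff for every choice of real stakes $s_1,\dots,s_m$ the random gain $G=\sum_{i}s_iH_i(X_i-\mu_i)$, restricted to the values it can take when $H_1\vee\dots\vee H_m$ is true, satisfies $\min G\le 0\le\max G$ (and the same holds for every subfamily). Events $E_1,\dots,E_n,H_1,\dots,H_n$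 are logically independent if all $2^{2n}$ conjunctions of these events or their negations are nonempty. Conjunction of $n$ conditional events: for every nonempty $S\subseteq\{1,\dots,n\}$ let $x_S$ be a prevision value assigned to $\mathscr C_S=\bigwedge_{i\in S}(E_i|H_i)$ (defined recursively, $\mathscr C_{\{i\}}=E_i|H_i$, $x_{\{i\}}=x_i$). Then $\mathscr C_{1\cdots n}$ is the random quantity equal to $1$ if $\bigwedge_{i=1}^nE_iH_i$ is true; $0$ if $\bigvee_{i=1}^n\bar E_iH_i$ is true; $x_S$ if $(\bigwedge_{i\in S}\bar H_i)\wedge(\bigwedge_{i\notin S}E_iH_i)$ is true, for each nonempty strict subset $S$; and $x_{1\cdots n}=\mathbb P(\mathscr C_{1\cdots n})$ if $\bigwedge_{i=1}^n\bar H_i$ is true. The values $x_S$ of the strict sub-conjunctions are fixed (coherently assessed) beforehand; the statement concerns the assessment on $\mathcal F$. *)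

From mathcomp Require Import all_boot all_order all_algebra.
From mathcomp Require Import reals.
Set Implicit Arguments. Unset Strict Implicit. Unset Printing Implicit Defensive.
Import Order.TTheory GRing.Theory Num.Theory.
Local Open Scope ring_scope.

(* Events on an abstract sample space Omega are boolean predicates
   (identified with their indicators). *)

Definition logically_independent (Omega : Type) (n : nat)
    (E H : 'I_n -> Omega -> bool) : Prop :=
  forall a b : 'I_n -> bool,
    exists w : Omega, forall i : 'I_n, E i w = a i /\ H i w = b i.

(* The conjunction C_{1..n} as a random quantity, given the values
   x S assigned to C_S for nonempty S (x [set i] = x_i = P(E_i|H_i),
   x setT = x_{1..n} = P(C_{1..n})):
   1 if all E_i H_i, 0 if some (not E_i) H_i,
   x_S where S = {i | not H_i} otherwise (then E_i H_i for i notin S). *)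
Definition conj_rq (R : realType) (Omega : Type) (n : nat)
    (E H : 'I_n -> Omega -> bool) (x : {set 'I_n} -> R) (w : Omega) : R :=
  if [forall i, E i w && H i w] then 1
  else if [exists i, ~~ E i w && H i w] then 0
  else x [set i | ~~ H i w].

(* Coherence (de Finetti) of a prevision assessment mu on a finite family
   of conditional random quantities X_j | K_j (j : 'I_m): for every
   nonempty subfamily J and all real stakes s, the random gain
   G = sum_{j in J} s_j K_j (X_j - mu_j), restricted to the outcomes where
   some K_j (j in J) is true, takes both a value <= 0 and a value >= 0
   (i.e. min G <= 0 <= max G, G taking finitely many values). *)
Definition coherent (R : realType) (Omega : Type) (m : nat)
    (X : 'I_m -> Omega -> R) (K : 'I_m -> Omega -> bool) (mu : 'I_m -> R)
    : Prop :=
  forall (J : {set 'I_m}) (s : 'I_m -> R), J != set0 ->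
    (exists w, [exists j in J, K j w] /\
       \sum_(j in J) s j * (K j w)%:R * (X j w - mu j) <= 0) /\
    (exists w, [exists j in J, K j w] /\
       0 <= \sum_(j in J) s j * (K j w)%:R * (X j w - mu j)).

(* The family F = {E_1|H_1, ..., E_n|H_n, C_{1..n}}, indexed by 'I_n.+1:
   index j < n is E_j|H_j (via unlift ord_max), index n (ord_max) is C_{1..n}, whose conditioning event
   is H_1 \/ ... \/ H_n. *)
Definition famX (R : realType) (Omega : Type) (n : nat)
    (E H : 'I_n -> Omega -> bool) (x : {set 'I_n} -> R)
    (j : 'I_n.+1) (w : Omega) : R :=
  match unlift ord_max j with
  | Some i => (E i w)%:R
  | None => conj_rq E H x w
  end.

Definition famK (Omega : Type) (n : nat) (H : 'I_n -> Omega -> bool)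
    (j : 'I_n.+1) (w : Omega) : bool :=
  match unlift ord_max j with
  | Some i => H i w
  | None => [exists i, H i w]
  end.

Definition famMu (R : realType) (n : nat) (x : {set 'I_n} -> R)
    (j : 'I_n.+1) : R :=
  match unlift ord_max j with
  | Some i => x [set i]
  | None => x setT
  end.

Definition in_Istar (R : realType) (n : nat) (x : {set 'I_n} -> R) : Prop :=
  exists lam : {ffun 'I_n -> bool} -> R,
    (forall q, 0 <= lam q) /\
    \sum_q lam q = 1 /\
    (forall i : 'I_n, x [set i] = \sum_q lam q * (q i)%:R) /\
    x setT = \sum_q lam q * \prod_(i < n) (q i)%:R.

From mathcomp Require Import all_boot all_order all_algebra.
From mathcomp Require Import reals.
Set Implicit Arguments. Unset Strict Implicit. Unset Printing Implicit Defensive.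
Import Order.TTheory GRing.Theory Num.Theory.
Local Open Scope ring_scope.

(* Each vertex q in {0,1}^n of I* is the vector of values that
   the family F takes on an outcome where every H_i is true and E_i holds
   exactly when q_i = 1; logical independence guarantees such an outcome,
   and there every conditioning event of F is true.  Hence for any stakes
   the random gain, evaluated at that outcome, equals the "vertex gain"
   g(q) = sum_j s_j (V_q(j) - mu_j), where V_q is the vertex.  Since M is a
   convex combination sum_q lam_q V_q, the lam-average of the vertex gains
   is 0, so some vertex gain is <= 0 and some is >= 0; realizing those two
   vertices gives the two outcomes required by coherence. *)

Lemma convex_avg0_le0 (R : realDomainType) (T : finType) (lam g : T -> R) :
  (forall q, 0 <= lam q) -> \sum_q lam q = 1 -> \sum_q lam q * g q = 0 ->
  exists q, g q <= 0.
Proof.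
move=> lam_ge0 lam_sum1 avg0.
case: (boolP [exists q, g q <= 0]) => [/existsP[q gq_le0]|/existsPn g_gt0].
  by exists q.
have {}g_gt0 q : 0 < g q by rewrite ltNge g_gt0.
have lam0 q : lam q = 0.
  move/eqP: avg0; rewrite psumr_eq0 => [/allP/(_ q (mem_index_enum q))|q' _].
    by rewrite implyTb mulf_eq0 (gt_eqF (g_gt0 q)) orbF => /eqP.
  by rewrite mulr_ge0 // ltW.
by move: lam_sum1; rewrite big1 // => /eqP; rewrite eq_sym oner_eq0.
Qed.

Lemma convex_avg0_ge0 (R : realDomainType) (T : finType) (lam g : T -> R) :
  (forall q, 0 <= lam q) -> \sum_q lam q = 1 -> \sum_q lam q * g q = 0 ->
  exists q, 0 <= g q.
Proof.
move=> lam_ge0 lam_sum1 avg0.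
have [|q] := @convex_avg0_le0 _ _ lam (fun q => - g q) lam_ge0 lam_sum1.
  by under eq_bigr do rewrite mulrN; rewrite sumrN avg0 oppr0.
by rewrite oppr_le0; exists q.
Qed.

Lemma avg_gain0 (R : comPzRingType) (T I : finType) (lam : T -> R)
    (V : T -> I -> R) (mu : I -> R) (J : {set I}) (s : I -> R) :
  \sum_q lam q = 1 -> (forall j, \sum_q lam q * V q j = mu j) ->
  \sum_q lam q * \sum_(j in J) s j * (V q j - mu j) = 0.
Proof.
move=> lam_sum1 mu_avg.
under eq_bigr do rewrite mulr_sumr.
rewrite exchange_big /=; apply: big1 => j _.
under eq_bigr do rewrite mulrCA mulrBr.
by rewrite -mulr_sumr sumrB -mulr_suml lam_sum1 mul1r mu_avg subrr mulr0.
Qed.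

Definition vertex (R : realType) (n : nat) (q : {ffun 'I_n -> bool})
    (j : 'I_n.+1) : R :=
  match unlift ord_max j with
  | Some i => (q i)%:R
  | None => [forall i, q i]%:R
  end.

Lemma prod_bool_nat (R : realType) (n : nat) (q : {ffun 'I_n -> bool}) :
  \prod_(i < n) ((q i)%:R : R) = [forall i, q i]%:R.
Proof.
case: (boolP [forall i, q i]) => [/forallP all_q|/forallPn [i qi_false]].
  by apply: big1 => i _; rewrite all_q.
by rewrite (bigD1 i) //= (negbTE qi_false) mul0r.
Qed.

Lemma Istar_convex (R : realType) (n : nat) (x : {set 'I_n} -> R) :
  in_Istar x -> exists lam : {ffun 'I_n -> bool} -> R,
    [/\ forall q, 0 <= lam q, \sum_q lam q = 1 &
        forall j : 'I_n.+1, \sum_q lam q * vertex R q j = famMu x j].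
Proof.
move=> [lam [lam_ge0 [lam_sum1 [x_single x_all]]]].
exists lam; split=> // j; rewrite /vertex /famMu.
case: (unlift ord_max j) => [i|]; first by rewrite x_single.
by rewrite x_all; apply: eq_bigr => q _; rewrite prod_bool_nat.
Qed.

Lemma famX_vertex (R : realType) (n : nat) (Omega : Type)
    (E H : 'I_n -> Omega -> bool) (x : {set 'I_n} -> R)
    (q : {ffun 'I_n -> bool}) (w : Omega) :
  (forall i, E i w = q i /\ H i w = true) ->
  forall j, famX E H x j w = vertex R q j.
Proof.
move=> Ew j; rewrite /famX /vertex /conj_rq.
case: (unlift ord_max j) => [i|]; first by case: (Ew i) => ->.
have -> : [forall i, E i w && H i w] = [forall i, q i].
  by apply: eq_forallb => i; case: (Ew i) => -> ->; rewrite andbT.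
case: (boolP [forall i, q i]) => // /forallPn [i qi_false].
suff -> : [exists i, ~~ E i w && H i w] by [].
by apply/existsP; exists i; case: (Ew i) => -> ->; rewrite qi_false.
Qed.

(* At such an outcome every conditioning event of F is true (for C_{1..n}
   this needs n > 0, so that H_1 \/ ... \/ H_n is a nonempty disjunction). *)
Lemma famK_vertex (n : nat) (Omega : Type) (H : 'I_n -> Omega -> bool)
    (w : Omega) :
  (0 < n)%N -> (forall i, H i w = true) -> forall j, famK H j w.
Proof.
move=> n_gt0 Hw j; rewrite /famK; case: (unlift ord_max j) => [i|] //.
by apply/existsP; exists (Ordinal n_gt0).
Qed.

Lemma vertex_gain_realized (R : realType) (n : nat) (Omega : Type)
    (E H : 'I_n -> Omega -> bool) (x : {set 'I_n} -> R)
    (J : {set 'I_n.+1}) (s : 'I_n.+1 -> R) (q : {ffun 'I_n -> bool}) :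
  (0 < n)%N -> logically_independent E H -> J != set0 ->
  exists w, [exists j in J, famK H j w] /\
    \sum_(j in J) s j * (famK H j w)%:R * (famX E H x j w - famMu x j)
    = \sum_(j in J) s j * (vertex R q j - famMu x j).
Proof.
move=> n_gt0 indep /set0Pn [j0 j0J].
have [w Ew] := indep (fun i => q i) (fun _ => true).
have Kw := famK_vertex n_gt0 (fun i => (Ew i).2).
exists w; split; first by apply/existsP; exists j0; rewrite j0J Kw.
by apply: eq_bigr => j _; rewrite Kw mulr1 (famX_vertex x Ew).
Qed.

Theorem theorem9 (R : realType) (n : nat) (Omega : Type)
    (E H : 'I_n -> Omega -> bool) (x : {set 'I_n} -> R) :
  (2 <= n)%N ->
  logically_independent E H ->
  (forall i : 'I_n, exists w : Omega, H i w) ->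
  in_Istar x ->
  coherent (famX E H x) (famK H) (famMu x).
Proof.
move=> n_ge2 indep _ /Istar_convex [lam [lam_ge0 lam_sum1 mu_avg]] J s J0.
have n_gt0 : (0 < n)%N by apply: leq_trans n_ge2.
pose gain q := \sum_(j in J) s j * (vertex R q j - famMu x j).
have avg0 : \sum_q lam q * gain q = 0 by apply: avg_gain0.
split.
- have [q gain_le0] := convex_avg0_le0 lam_ge0 lam_sum1 avg0.
  have [w [Kw gain_w]] := vertex_gain_realized x s q n_gt0 indep J0.
  by exists w; rewrite gain_w.
- have [q gain_ge0] := convex_avg0_ge0 lam_ge0 lam_sum1 avg0.
  have [w [Kw gain_w]] := vertex_gain_realized x s q n_gt0 indep J0.
  by exists w; rewrite gain_w.
Qed.
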